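(* Let $n\ge 2$ and let $A=(a_{pq})\in\mathbb{R}^{n\times n}$ be the weighted adjacency matrix of a directed stem-bud network without self-loops, i.e., there is $y\in\{1,\dots,n-1\}$ such that $a_{pq}=0$ unless $(p,q)=(q+1,q)$ for some $q\in\{1,\dots,n-1\}$ or $(p,q)=(y,n)$ (this includes the directed line network, where also $a_{yn}=0$). Let $i_b\in\{1,\dots,n\}$, $b=e_{i_b}$, and let $T$ be a positive integer. Then the controllability Gramian $\mathcal{W}_{i_b}=\sum_{t=0}^{T-1}A^tbb^{\top}(A^t)^{\top}$ is a diagonal matrix.
   Context: $e_p$ denotes the $p$-th canonical unit vector in $\mathbb{R}^n$. In a directed stem-bud network the stem is the path $1\to2\to\cdots\to y$ and the bud is the cycle $y\to y+1\to\cdots\to n\to y$; the entry $a_{pq}$ is the weight of the edge $q\to p$. *)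

From mathcomp Require Import all_boot all_order all_algebra.
From mathcomp Require Import reals.
Set Implicit Arguments. Unset Strict Implicit. Unset Printing Implicit Defensive.
Import GRing.Theory Num.Theory.
Local Open Scope ring_scope.

Fixpoint mxpow (R : pzRingType) (n : nat) (A : 'M[R]_n) (t : nat) : 'M[R]_n :=
  match t with
  | 0 => 1%:M
  | t'.+1 => A *m mxpow A t'
  end.

Definition gramian (R : pzRingType) (n : nat) (A : 'M[R]_n) (b : 'cV[R]_n)
  (T : nat) : 'M[R]_n :=
  \sum_(t < T) (mxpow A t *m b *m b^T *m (mxpow A t)^T).

Definition unitvec (R : pzRingType) (n : nat) (i : 'I_n) : 'cV[R]_n :=
  delta_mx i 0.

Definition is_diagonal (R : pzRingType) (n : nat) (M : 'M[R]_n) : Prop :=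
  forall i j : 'I_n, i != j -> M i j = 0.

From mathcomp Require Import all_boot all_order all_algebra.
From mathcomp Require Import reals.
From mathcomp Require Import zify.
Local Open Scope ring_scope.
Import GRing.Theory.

Set Implicit Arguments.
Unset Strict Implicit.
Unset Printing Implicit Defensive.

(* In a stem-bud network every node has at most one out-neighbour, so each
   column of A has at most one nonzero entry.  Such a matrix maps a vector
   supported on a single coordinate to another one, hence every A^t b is
   supported on a single coordinate and every summand A^t b (A^t b)^T of the
   Gramian is diagonal. *)

Section SingleSupport.

Variables (R : pzRingType) (n : nat).

Definition single_support (v : 'cV[R]_n) : Prop :=
  exists k : 'I_n, forall i, i != k -> v i 0 = 0.

Definition col_single (A : 'M[R]_n) : Prop :=
  forall k i i' : 'I_n, A i k != 0 -> A i' k != 0 -> i = i'.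

Lemma single_support_unitvec (i : 'I_n) : single_support (unitvec R i).
Proof. by exists i => j /negbTE nji; rewrite /unitvec mxE nji. Qed.

Lemma mulmx_single_support (A : 'M[R]_n) (v : 'cV[R]_n) :
  col_single A -> single_support v -> single_support (A *m v).
Proof.
move=> colA [k vk].
have Av i : (A *m v) i 0 = A i k * v k 0.
  rewrite mxE (bigD1 k) //= big1 ?addr0 // => j /vk ->.
  by rewrite mulr0.
have [i0 Ai0k | A_k0] := pickP (fun i => A i k != 0).
  exists i0 => i ni0; rewrite Av.
  have [-> | Aik] := eqVneq (A i k) 0; first by rewrite mul0r.
  by rewrite (colA _ _ _ Aik Ai0k) eqxx in ni0.
by exists k => i _; rewrite Av (eqP (negbFE (A_k0 i))) mul0r.
Qed.

Lemma single_support_mxpow (A : 'M[R]_n) (v : 'cV[R]_n) (t : nat) :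
  col_single A -> single_support v -> single_support (mxpow A t *m v).
Proof.
move=> colA vS; elim: t => [|t IHt] /=; first by rewrite mul1mx.
by rewrite -mulmxA; apply: mulmx_single_support.
Qed.

Lemma single_support_outer_diag (v : 'cV[R]_n) :
  single_support v -> is_diagonal (v *m v^T).
Proof.
move=> [k vk] i j nij; rewrite mxE big_ord1 [v^T _ _]mxE.
case: (eqVneq i k) nij => [-> kj | nik _]; last by rewrite vk ?mul0r.
by rewrite (vk j) ?mulr0 // eq_sym.
Qed.

Lemma is_diagonal_sum (I : finType) (F : I -> 'M[R]_n) :
  (forall t, is_diagonal (F t)) -> is_diagonal (\sum_t F t).
Proof. by move=> Fdiag i j nij; rewrite summxE big1 // => t _; apply: Fdiag. Qed.

End SingleSupport.

Lemma gramian_single_support_diag (R : comPzRingType) (n : nat)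
    (A : 'M[R]_n) (b : 'cV[R]_n) (T : nat) :
  col_single A -> single_support b -> is_diagonal (gramian A b T).
Proof.
move=> colA bS; apply: is_diagonal_sum => t.
rewrite -mulmxA -trmx_mul.
exact/single_support_outer_diag/single_support_mxpow.
Qed.

Lemma stem_bud_col_single (R : pzRingType) (n y : nat) (A : 'M[R]_n) :
  (forall i j : 'I_n, A i j != 0 ->
     (nat_of_ord i = (nat_of_ord j).+1) \/
     (nat_of_ord i = y.-1 /\ nat_of_ord j = n.-1)) ->
  col_single A.
Proof.
move=> hA k i i' Aik Ai'k; apply: val_inj => /=.
move: (hA _ _ Aik) (hA _ _ Ai'k) (ltn_ord i) (ltn_ord i'); lia.
Qed.

Theorem proposition4p1 (R : realType) (n : nat) (hn : (2 <= n)%N)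
  (A : 'M[R]_n) (y : nat) (hy1 : (1 <= y)%N) (hy2 : (y <= n - 1)%N)
  (hA : forall i j : 'I_n, A i j != 0 ->
          (nat_of_ord i = (nat_of_ord j).+1) \/
          (nat_of_ord i = y.-1 /\ nat_of_ord j = n.-1))
  (ib : 'I_n) (T : nat) (hT : (0 < T)%N) :
  is_diagonal (gramian A (unitvec R ib) T).
Proof.
apply: gramian_single_support_diag.
- exact: stem_bud_col_single hA.
- exact: single_support_unitvec.
Qed.
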